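(* Let $R$ be a commutative ring and $\mathcal P$ a class of pairs $(L,M)$ of $R$-modules with $L\subseteq M$ (all pairs with both modules in one fixed category among all, finitely generated, Artinian, or Matlis-dualizable $R$-modules). Let $\Gamma$ be a directed poset and $\{p_j\mid j\in\Gamma\}$ pair operations on $\mathcal P$ with $p_i\le p_j$ whenever $i\le j$, and let $p=\varinjlim_{j\in\Gamma}p_j$, i.e. $p(L,M)=\bigcup_{j\in\Gamma}p_j(L,M)$. If every $p_j$ is hereditary, then $p$ is hereditary.
   Context: A pair operation on $\mathcal P$ assigns to each $(L,M)\in\mathcal P$ a submodule $p(L,M)\subseteq M$ with $\phi(p(L,M))=p(\phi(L),M')$ for every isomorphism $\phi:M\to M'$. $p\le p'$ means $p(L,M)\subseteq p'(L,M)$ for all pairs. A poset is directed if any two elements have a common upper bound. $p$ is hereditary if $p(L,N)=p(L,M)\cap N$ whenever $L\subseteq N\subseteq M$ (with the pairs in $\mathcal P$). *)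

From HB Require Import structures.
From mathcomp Require Import all_boot all_order all_algebra.
Set Implicit Arguments. Unset Strict Implicit. Unset Printing Implicit Defensive.
Import Order.TTheory GRing.Theory.
Local Open Scope ring_scope.

(* A submodule L of an R-module M is represented by a predicate on M closed
   under the module operations: a term of type [submodClosed M]. *)

Record subT (R : pzRingType) (M : lmodType R) (N : submodClosed M) :=
  SubT { subval : M; subvalP : subval \in N }.
Arguments subval {R M N}.

HB.instance Definition _ (R : pzRingType) (M : lmodType R) (N : submodClosed M) :=
  [isSub for (@subval R M N)].
HB.instance Definition _ (R : pzRingType) (M : lmodType R) (N : submodClosed M) :=
  [Choice of subT N by <:].
HB.instance Definition _ (R : pzRingType) (M : lmodType R) (N : submodClosed M) :=
  [SubChoice_isSubLmodule of subT N by <:].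

Definition modclass (R : pzRingType) := lmodType R -> Prop.

Definition inP (R : pzRingType) (C : modclass R) (M : lmodType R)
  (L : submodClosed M) : Prop := C M /\ C (subT L).

(* A pair-operation candidate: to every pair (L, M) it assigns a submodule
   p(L,M) of M.  Only its values on pairs of P matter. *)
Definition pairfun (R : pzRingType) :=
  forall M : lmodType R, submodClosed M -> submodClosed M.

Definition is_pair_op (R : pzRingType) (C : modclass R) (p : pairfun R) : Prop :=
  forall (M M' : lmodType R) (phi : {linear M -> M'}), bijective phi ->
  forall (L : submodClosed M) (L' : submodClosed M'),
    inP C L -> inP C L' ->
    (forall y : M', y \in L' <-> exists2 x : M, x \in L & phi x = y) ->
    forall y : M', y \in p M' L' <-> exists2 x : M, x \in p M L & phi x = y.

(* Hereditary, stated for a membership relation q(L,M) on M: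
   q(L,N) = q(L,M) ∩ N whenever L ⊆ N ⊆ M with both pairs in P.  Here the
   pair (L,N) is the submodule L' of the module N (= subT N) whose elements
   are exactly those of L. *)
Definition hereditary_rel (R : pzRingType) (C : modclass R)
  (q : forall M : lmodType R, submodClosed M -> M -> Prop) : Prop :=
  forall (M : lmodType R) (N L : submodClosed M) (L' : submodClosed (subT N)),
    {subset L <= N} ->
    (forall y : subT N, y \in L' <-> subval y \in L) ->
    inP C L -> inP C L' ->
    forall y : subT N, q (subT N) L' y <-> q M L (subval y).

Definition hereditary (R : pzRingType) (C : modclass R) (p : pairfun R) : Prop :=
  hereditary_rel C (fun M L x => x \in p M L).

Definition pairop_le (R : pzRingType) (C : modclass R) (p q : pairfun R) : Prop :=
  forall (M : lmodType R) (L : submodClosed M), inP C L -> {subset p M L <= q M L}.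

Definition directed (d : Order.disp_t) (G : porderType d) : Prop :=
  forall i j : G, exists k : G, (i <= k)%O /\ (j <= k)%O.

Definition dirlim (R : pzRingType) (d : Order.disp_t) (G : porderType d)
  (pj : G -> pairfun R) : forall M : lmodType R, submodClosed M -> M -> Prop :=
  fun M L x => exists j : G, x \in pj j M L.

From HB Require Import structures.
From mathcomp Require Import all_boot all_order all_algebra.

(* Heredity is a pointwise condition on pairs, so it passes to unions:
   p(L,N) = U_j p_j(L,N) = U_j (p_j(L,M) ∩ N) = p(L,M) ∩ N. *)

Lemma hereditary_rel_bigcup (R : pzRingType) (C : modclass R) (I : Type)
    (q : I -> forall M : lmodType R, submodClosed M -> M -> Prop) :
  (forall i, hereditary_rel C (q i)) ->
  hereditary_rel C (fun M L x => exists i, q i M L x).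
Proof.
move=> q_hered M N L L' sLN L'E PL PL' y.
by split=> -[i qi]; exists i; apply/(q_hered i M N L L' sLN L'E PL PL' y).
Qed.

Lemma hereditary_dirlim (R : pzRingType) (C : modclass R)
    (d : Order.disp_t) (G : porderType d) (pj : G -> pairfun R) :
  (forall j : G, hereditary C (pj j)) -> hereditary_rel C (dirlim pj).
Proof. exact: hereditary_rel_bigcup. Qed.

(* Directedness, monotonicity and compatibility with isomorphisms are what
   make the limit a pair operation; heredity does not need them. *)
Theorem proposition6p8 (R : comPzRingType) (C : modclass R)
  (d : Order.disp_t) (G : porderType d) (pj : G -> pairfun R) :
  directed G ->
  (forall j : G, is_pair_op C (pj j)) ->
  (forall i j : G, (i <= j)%O -> pairop_le C (pj i) (pj j)) ->
  (forall j : G, hereditary C (pj j)) ->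
  hereditary_rel C (dirlim pj).
Proof. by move=> _ _ _; apply: hereditary_dirlim. Qed.
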